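(* Let $\mathbb{Q}\subset K$ be a totally real Galois extension of finite degree. Then $\overline{N}_{K/\mathbb{Q}}=\mathbb{Q}$.
   Context: $\overline{N}_{K/\mathbb{Q}}$ is the set of all finite sums $\sum_iN_{K/\mathbb{Q}}(a_i)$ with $a_i\in K$, where $N_{K/\mathbb{Q}}$ is the field norm. A number field is totally real if all its embeddings into $\mathbb{C}$ land in $\mathbb{R}$. *)

From HB Require Import structures.
From mathcomp Require Import all_boot all_order all_algebra all_field.
Set Implicit Arguments. Unset Strict Implicit. Unset Printing Implicit Defensive.
Import GRing.Theory Num.Theory.
Local Open Scope ring_scope.

(* A number field K is modelled as L : fieldExtType rat (finite dimensional
   field extension of Q); a finite Galois extension of Q is a
   L : splittingFieldType rat (normal, hence Galois in char 0).
   Complex embeddings of a number field land in algebraic numbers, so we use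
   algC as the complex numbers. *)

Definition totally_real (L : fieldExtType rat) : Prop :=
  forall (f : {rmorphism L -> algC}) (x : L), f x \is Num.real.

(* The field norm N_{K/Q}, for K/Q Galois: product of all Galois conjugates. *)
Definition normKQ (L : splittingFieldType rat) (a : L) : L :=
  galNorm 1%VS fullv a.

Definition in_sum_norms (L : splittingFieldType rat) (x : L) : Prop :=
  exists s : seq L, x = \sum_(a <- s) normKQ a.

From HB Require Import structures.
From mathcomp Require Import all_boot all_order all_algebra all_field.
Import Order.TTheory GRing.Theory Num.Theory.
Set Implicit Arguments. Unset Strict Implicit. Unset Printing Implicit Defensive.
Local Open Scope ring_scope.

(* Every norm lies in
   Q, so sums of norms are rational; conversely every rational is such a sum:
   - 0 is the empty sum;
   - a positive rational a/b (a, b > 0) equals a * b^(n-1) * N(1/b), a sum of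
     a * b^(n-1) copies of the norm N(1/b);
   - some norm is negative: embed K into C, let theta be a primitive element
     and q a rational lying strictly between the smallest and the second
     smallest of the (real, pairwise distinct) conjugates of theta; then
     N(theta - q) is a product with exactly one negative factor.  A negative
     rational c is then (c / v) * v with v = N(e) < 0, and c / v > 0 is
     m * N(w), so c = m * N(w * e). *)

Lemma rat_between (x y : algC) : x \is Num.real -> x < y ->
  exists q : rat, x < ratr q < y.
Proof.
move=> xR lt_xy; have d_gt0 : 0 < y - x by rewrite subr_gt0.
pose N := Num.bound (y - x)^-1.
have ltN : (y - x)^-1 < N%:R by apply: archi_boundP; rewrite invr_ge0 ltW.
have N_gt0 : (0 : algC) < N%:R by apply: le_lt_trans ltN; rewrite invr_ge0 ltW.
pose k := Num.floor (x * N%:R) + 1.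
have xNR : x * N%:R \is Num.real by rewrite realM // realn.
have lt_xN_k : x * N%:R < k%:~R by apply: real_floorD1_gt.
have le_k_xN1 : (k%:~R : algC) <= x * N%:R + 1.
  by rewrite /k rmorphD /= lerD2r real_floor_le.
have lt1 : 1 < (y - x) * N%:R by rewrite -ltr_pdivrMl // mulr1.
exists (k%:~R / N%:R); rewrite fmorph_div /= ratr_int ratr_nat.
rewrite ltr_pdivlMr // ltr_pdivrMr // lt_xN_k /=.
by apply: le_lt_trans le_k_xN1 _; rewrite -ltrBrDl -mulrBl.
Qed.

Lemma real_seq_min (R : numDomainType) (T : eqType) (s : seq T) (g : T -> R) :
  s != [::] -> {in s, forall i, g i \is Num.real} ->
  exists2 i, i \in s & {in s, forall j, g i <= g j}.
Proof.
elim: s => // a s IHs _ sR.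
have aR : g a \is Num.real by apply: sR; rewrite mem_head.
have [-> | s_nil] := eqVneq s [::].
  by exists a; rewrite ?mem_head // => j; rewrite inE => /eqP->.
have [i si min_i] : exists2 i, i \in s & {in s, forall j, g i <= g j}.
  by apply: IHs => // j sj; apply: sR; rewrite inE sj orbT.
have iR : g i \is Num.real by apply: sR; rewrite inE si orbT.
have [le_ai | le_ia] := real_leP aR iR.
  exists a; first exact: mem_head.
  by move=> j; rewrite inE => /predU1P[-> // | /min_i]; apply: le_trans.
exists i; first by rewrite inE si orbT.
by move=> j; rewrite inE => /predU1P[-> | /min_i//]; apply: ltW.
Qed.

Lemma rat_isolates_min (T : finType) (A : {set T}) (g : T -> algC) :
  (1 < #|A|)%N -> {in A, forall s, g s \is Num.real} -> {in A &, injective g} ->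
  exists2 s0, s0 \in A &
    exists q : rat, g s0 < ratr q /\ {in A :\ s0, forall s, ratr q < g s}.
Proof.
move=> A_gt1 AR g_inj.
have [s0 As0 min_s0] : exists2 s0, s0 \in enum A & {in enum A, forall s, g s0 <= g s}.
  apply: real_seq_min => [|s]; last by rewrite mem_enum; apply: AR.
  by rewrite -size_eq0 -cardE -lt0n ltnW.
rewrite mem_enum in As0.
have [s1 As1 min_s1] : exists2 s1, s1 \in enum (A :\ s0) &
    {in enum (A :\ s0), forall s, g s1 <= g s}.
  apply: real_seq_min => [|s]; last by rewrite mem_enum => /setD1P[_ /AR].
  by rewrite -size_eq0 -cardE -lt0n; move: A_gt1; rewrite (cardsD1 s0) As0.
move: As1; rewrite mem_enum => /setD1P[s10 As1].
have lt01 : g s0 < g s1.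
  rewrite lt_neqAle min_s0 ?mem_enum // andbT.
  by apply: contra s10 => /eqP/g_inj eq01; rewrite eq01.
have [q /andP[lt_s0q ltq1]] := rat_between (AR s0 As0) lt01.
exists s0 => //; exists q; split => // s As.
by apply: lt_le_trans ltq1 _; apply: min_s1; rewrite mem_enum.
Qed.

Section LiftMorphism.
Variables (A B C : nzRingType) (g : {rmorphism A -> B}) (h : {rmorphism A -> C}).
Hypothesis g_surj : forall b, exists a, g a = b.
Hypothesis ker_g_sub : forall a, g a = 0 -> h a = 0.

Let g_surjb b : exists a, g a == b.
Proof. by have [a <-] := g_surj b; exists a. Qed.

Definition lift_morph (b : B) : C := h (xchoose (g_surjb b)).

Let lift_preimage b : g (xchoose (g_surjb b)) = b.
Proof. exact/eqP/(xchooseP (g_surjb b)). Qed.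

Lemma lift_morphE a : lift_morph (g a) = h a.
Proof.
apply/eqP; rewrite -subr_eq0 -rmorphB; apply/eqP/ker_g_sub.
by rewrite rmorphB lift_preimage subrr.
Qed.

Lemma lift_morph_is_zmod : zmod_morphism lift_morph.
Proof.
move=> b1 b2; rewrite -[b1]lift_preimage -[b2]lift_preimage.
by rewrite -rmorphB !lift_morphE rmorphB.
Qed.

Lemma lift_morph_is_monoid : monoid_morphism lift_morph.
Proof.
split; first by rewrite -(rmorph1 g) lift_morphE rmorph1.
move=> b1 b2; rewrite -[b1]lift_preimage -[b2]lift_preimage.
by rewrite -rmorphM !lift_morphE rmorphM.
Qed.

HB.instance Definition _ :=
  GRing.isZmodMorphism.Build B C lift_morph lift_morph_is_zmod.
HB.instance Definition _ :=
  GRing.isMonoidMorphism.Build B C lift_morph lift_morph_is_monoid.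

Definition lift_rmorph : {rmorphism B -> C} := lift_morph.
End LiftMorphism.

(* A number field generated by theta embeds into algC: send theta to a complex
   root z of its minimal polynomial, i.e. factor evaluation at z through the
   surjection {poly rat} -> L given by evaluation at theta. *)
Lemma num_field_embedding (L : fieldExtType rat) (theta : L) :
  <<1; theta>>%VS = fullv -> inhabited {rmorphism L -> algC}.
Proof.
move=> gen_theta.
have /polyOver1P[q Dq] := minPolyOver 1 theta.
have /closed_rootP[z qz] : size (map_poly ratr q : {poly algC}) != 1%N.
  by rewrite size_map_poly -(size_map_poly (in_alg L)) -Dq size_minPoly.
pose h := horner_morph (fun a : rat => mulrC z (ratr a)).
pose g := fieldExt_horner theta.
have g_surj y : exists p, g p = y.
  have /Fadjoin1_polyP[p ->] : y \in <<1; theta>>%VS by rewrite gen_theta memvf.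
  by exists p.
have ker_g_sub p : g p = 0 -> h p = 0.
  move=> gp0; have : minPoly 1 theta %| map_poly (in_alg L) p.
    by apply: minPoly_dvdp; [apply: alg_polyOver | apply/rootP].
  rewrite Dq dvdp_map => /divpK <-.
  by rewrite /h rmorphM /= [horner_morph _ q](rootP qz) mulr0.
by constructor; exact: lift_rmorph ker_g_sub.
Qed.

Section NormsOverQ.
Variable L : splittingFieldType rat.
Local Notation G := ('Gal((fullv : {vspace L}) / 1%VS))%g.

Lemma normKQM (a b : L) : normKQ (a * b) = normKQ a * normKQ b.
Proof. exact: galNormM. Qed.

Lemma normKQ_scalar (c : rat) : normKQ (c%:A : L) = (c ^+ #|G|)%:A.
Proof.
rewrite /normKQ /galNorm (eq_bigr (fun=> c%:A)) => [|s _]; last exact: rmorph_alg.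
by rewrite prodr_const -!in_algE rmorphXn.
Qed.

Lemma sum_norms_nseq (m : nat) (w : L) :
  \sum_(a <- nseq m w) normKQ a = m%:R * normKQ w.
Proof. by rewrite big_nseq iter_addr addr0 mulr_natl. Qed.

(* Every positive rational a / b is m * N(w): take w = 1 / b and
   m = a * b ^ ([K : Q] - 1). *)
Lemma pos_rat_scaled_norm (c : rat) : 0 < c ->
  exists m : nat, exists w : L, c%:A = m%:R * normKQ w.
Proof.
move=> c_gt0; have [k Dn] : exists k, #|G| = k.+1.
  by exists #|G|.-1; rewrite prednK ?fingroup.cardG_gt0.
have b_neq0 : ((denq c)%:~R : rat) != 0 by rewrite intr_eq0 denq_neq0.
exists (absz (numq c * denq c ^+ k)), ((denq c)%:~R^-1 : rat)%:A.
rewrite normKQ_scalar Dn -[_%:R](rmorph_nat (in_alg L)) /= -scalerAl mul1r.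
rewrite scalerA; congr (_%:A); rewrite natr_absz ger0_norm; last first.
  by rewrite mulr_ge0 ?exprn_ge0 ?numq_ge0 ?denq_ge0 ?(ltW c_gt0).
rewrite -{1}(divq_num_den c) rmorphM rmorphXn /= exprVn exprS.
by rewrite [(denq c)%:~R * _]mulrC invfM mulrA mulfK // expf_neq0.
Qed.
End NormsOverQ.

Section TotallyRealGalois.
Variable L : splittingFieldType rat.
Local Notation G := ('Gal((fullv : {vspace L}) / 1%VS))%g.

Lemma gal_eq_on_generator (theta : L) : <<1; theta>>%VS = fullv ->
  {in G &, injective (fun s : gal_of fullv => s theta)}.
Proof.
move=> gen_theta s t Gs Gt st_theta; apply/eqP/gal_eqP => y _.
have : y \in <<1; theta>>%VS by rewrite gen_theta memvf.
case/Fadjoin_polyP => p Qp ->.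
by rewrite -!horner_map !(fixedPoly_gal (sub1v _)) //= st_theta.
Qed.

Hypothesis galL : galois 1 (fullv : {vspace L}).

(* In a Galois extension the norm is fixed by the Galois group, hence rational. *)
Lemma normKQ_rat (a : L) : normKQ a \in 1%VS.
Proof. by rewrite -(galois_fixedField galL); apply: galNorm_fixedField (memvf a). Qed.

Hypothesis realL : totally_real L.

(* A totally real Galois extension has an element of negative rational norm:
   N(theta - q) for q isolating the least real conjugate of a primitive
   element theta (or N(-1) = -1 when K = Q). *)
Lemma neg_rat_norm : exists e : L, exists2 v : rat, v < 0 & normKQ e = v%:A.
Proof.
have [G_gt1 | G_le1] := ltnP 1 #|G|; last first.
  have G1 : #|G| = 1%N by apply/eqP; rewrite eqn_leq G_le1 fingroup.cardG_gt0.
  by exists (-1), (-1) => //; rewrite -scaleN1r normKQ_scalar G1 expr1.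
pose theta := separable_generator 1 (fullv : {vspace L}).
have gen_theta : <<1; theta>>%VS = fullv.
  by rewrite -eq_adjoin_separable_generator ?sub1v //; case/and3P: galL.
have [f] := num_field_embedding gen_theta.
pose g (s : gal_of fullv) := f (s theta).
have g_real : {in G, forall s, g s \is Num.real} by move=> s _; apply: realL.
have g_inj : {in G &, injective g}.
  by move=> s t Gs Gt /fmorph_inj; apply: gal_eq_on_generator.
have [s0 Gs0 [q [lt_s0q lt_qG]]] := rat_isolates_min G_gt1 g_real g_inj.
have f_rat r : f r%:A = ratr r by rewrite rmorphZ_num rmorph1 mulr1.
pose e := theta - q%:A.
have f_normKQ_e : f (normKQ e) = \prod_(s in G) (g s - ratr q).
  rewrite rmorph_prod; apply: eq_bigr => s Gs.
  by rewrite !rmorphB /= rmorph_alg f_rat.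
have /vlineP[v Dv] := normKQ_rat e.
exists e, v => //; rewrite -(ltrq0 algC) -f_rat -Dv f_normKQ_e (bigD1 s0) //=.
rewrite pmulr_llt0 ?subr_lt0 // prodr_gt0 // => s /andP[Gs s_neq0].
by rewrite subr_gt0 lt_qG // in_setD1 s_neq0.
Qed.
End TotallyRealGalois.

Theorem mainTheorem10 (L : splittingFieldType rat) :
  galois 1%VS (fullv : {vspace L}) -> totally_real L ->
  forall x : L, in_sum_norms x <-> x \in 1%VS.
Proof.
move=> galL realL x; split=> [[s ->] | /vlineP[c ->]].
  by apply: rpred_sum => a _; apply: normKQ_rat.
have [c_lt0 | c_gt0 | ->] := ltrgtP c 0; last by exists [::]; rewrite big_nil scale0r.
- have [e [v v_lt0 Ne]] := neg_rat_norm galL realL.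
  have [m [w Dw]] : exists m : nat, exists w : L, (c / v)%:A = m%:R * normKQ w.
    by apply: pos_rat_scaled_norm; rewrite -mulrNN -invrN divr_gt0 ?oppr_gt0.
  exists (nseq m (w * e)); rewrite sum_norms_nseq normKQM Ne mulrA -Dw.
  by rewrite -scalerAl mul1r scalerA divfK ?lt_eqF.
- have [m [w Dw]] := pos_rat_scaled_norm L c_gt0.
  by exists (nseq m w); rewrite sum_norms_nseq.
Qed.
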